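(* Let $A=[a_1,\dots,a_N]$ and $B=[b_1,\dots,b_N]$ be $N\times N$ complex matrices, $\theta$ a real parameter, and $m_k(\theta)=(1-\theta)a_k+\theta b_k$ the $k$-th column of $(1-\theta)A+\theta B$. Define recursively $z_1=v_1=m_1$ and, for $k\ge2$, \[ v_k=m_k-\sum_{j=1}^{k-1}\frac{\langle z_j,m_k\rangle}{\|z_j\|^2}\,z_j,\qquad z_k=\Big(\prod_{j=1}^{k-1}\|z_j\|^2\Big)\Big\{m_k-\sum_{j=1}^{k-1}\frac{\langle z_j,m_k\rangle z_j}{\|z_j\|^2}\Big\}. \] Then for each $k\in\{1,\dots,N\}$, $z_k$ equals $v_k$ multiplied by a polynomial in $\theta$ of degree at most $D_k=3^{k-1}-1$ (its denominator), and every entry of $z_k(\theta)$ is a polynomial in $\theta$ of degree at most $D_k+1=3^{k-1}$.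
   Context: $\langle x,y\rangle=\sum_i\overline{x_i}y_i$ is the standard inner product on $\mathbb{C}^N$ and $\|x\|^2=\langle x,x\rangle$; for real $\theta$ these are polynomials in $\theta$ with complex coefficients. *)

From HB Require Import structures.
From mathcomp Require Import all_boot all_order all_algebra.
From mathcomp Require Import reals.
From mathcomp.real_closed Require Import complex.
Set Implicit Arguments. Unset Strict Implicit. Unset Printing Implicit Defensive.
Import Order.TTheory GRing.Theory Num.Theory.
Local Open Scope ring_scope.
Local Open Scope complex_scope.

Definition inner (R : realType) (N : nat) (x y : 'cV[R[i]]_N) : R[i] :=
  \sum_(l < N) (x l 0)^* * y l 0.

Definition norm2 (R : realType) (N : nat) (x : 'cV[R[i]]_N) : R[i] := inner x x.

Definition Mth (R : realType) (N : nat) (A B : 'M[R[i]]_N) (th : R) : 'M[R[i]]_N :=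
  (1 - th%:C) *: A + th%:C *: B.

(* the j-th column (0-based index j : nat) of a matrix; 0 if j >= N *)
Definition colnat (R : realType) (N : nat) (M : 'M[R[i]]_N) (j : nat) : 'cV[R[i]]_N :=
  \col_l (oapp (M l) 0 (insub j : option 'I_N)).

Definition mvec (R : realType) (N : nat) (A B : 'M[R[i]]_N) (th : R) (k : nat) :=
  colnat (Mth A B th) k.

Definition vnew (R : realType) (N : nat) (zs : seq 'cV[R[i]]_N) (mk : 'cV[R[i]]_N) :=
  mk - \sum_(z <- zs) (inner z mk / norm2 z) *: z.

Definition znew (R : realType) (N : nat) (zs : seq 'cV[R[i]]_N) (mk : 'cV[R[i]]_N) :=
  (\prod_(z <- zs) norm2 z) *: vnew zs mk.

(* zlist n = [:: z_0; ...; z_(n-1)] (0-based indices, z_0 = m_0) *)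
Fixpoint zlist (R : realType) (N : nat) (A B : 'M[R[i]]_N) (th : R) (n : nat)
  : seq 'cV[R[i]]_N :=
  match n with
  | 0 => [::]
  | n'.+1 => rcons (zlist A B th n') (znew (zlist A B th n') (mvec A B th n'))
  end.

Definition zvec (R : realType) (N : nat) (A B : 'M[R[i]]_N) (th : R) (k : nat) :=
  znew (zlist A B th k) (mvec A B th k).

Definition vvec (R : realType) (N : nat) (A B : 'M[R[i]]_N) (th : R) (k : nat) :=
  vnew (zlist A B th k) (mvec A B th k).

From HB Require Import structures.
From mathcomp Require Import all_boot all_order all_algebra.
From mathcomp Require Import reals.
From mathcomp.real_closed Require Import complex.
From mathcomp Require Import zify ring.
Set Implicit Arguments. Unset Strict Implicit. Unset Printing Implicit Defensive.
Import Order.TTheory GRing.Theory Num.Theory.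
Local Open Scope ring_scope.
Local Open Scope complex_scope.

(* With denominators cleared, z_k = (prod_j ||z_j||^2) m_k
   - sum_j (prod_(i <> j) ||z_i||^2) <z_j, m_k> z_j is division free, so by
   induction every z_k is a vector of polynomials in theta; at real theta,
   conjugation commutes with evaluation, so <z_j, m_k> and ||z_j||^2 are
   polynomials too.  If the m_j have degree <= d and z_j has degree <= d 3^j
   for j < k, the prefactor has degree <= sum_j 2 d 3^j = d (3^k - 1) and every
   term of z_k has degree <= d (3^k - 1) + d = d 3^k.  Here d = 1. *)

Local Notation ev x := (map_mx (horner_eval x%:C)).

Section DegreeBound.
Variable R : nzRingType.
Implicit Types (p q : {poly R}) (a b d : nat).

Definition deg_le p d := (size p <= d.+1)%N.

Lemma deg_le_widen p a b : deg_le p a -> (a <= b)%N -> deg_le p b.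
Proof. rewrite /deg_le; lia. Qed.

Lemma deg_leD p q d : deg_le p d -> deg_le q d -> deg_le (p + q) d.
Proof. by rewrite /deg_le => ? ?; have := size_polyD p q; lia. Qed.

Lemma deg_leN p d : deg_le p d -> deg_le (- p) d.
Proof. by rewrite /deg_le size_polyN. Qed.

Lemma deg_leM p q a b : deg_le p a -> deg_le q b -> deg_le (p * q) (a + b).
Proof. by rewrite /deg_le => ? ?; have := size_polyMleq p q; lia. Qed.

Lemma deg_leC (c : R) : deg_le c%:P 0.
Proof. exact: size_polyC_leq1. Qed.

Lemma deg_leX : deg_le 'X 1.
Proof. by rewrite /deg_le size_polyX. Qed.

Lemma deg_le_sum I (r : seq I) (P : pred I) (F : I -> {poly R}) d :
  (forall i, P i -> deg_le (F i) d) -> deg_le (\sum_(i <- r | P i) F i) d.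
Proof.
move=> Fd; elim/big_rec: _ => [|i p Pi pd]; last exact: deg_leD (Fd i Pi) pd.
by rewrite /deg_le size_poly0.
Qed.

Lemma deg_le_prod I (r : seq I) (P : pred I) (F : I -> {poly R}) (G : I -> nat) :
  (forall i, P i -> deg_le (F i) (G i)) ->
  deg_le (\prod_(i <- r | P i) F i) (\sum_(i <- r | P i) G i).
Proof.
move=> FG; elim/big_rec2: _ => [|i n p Pi pn]; last exact: deg_leM (FG i Pi) pn.
by rewrite /deg_le size_poly1.
Qed.

End DegreeBound.

Lemma sum_double_pow3 d n : (\sum_(j < n) (d * 3 ^ j).*2 = d * (3 ^ n).-1)%N.
Proof.
under eq_bigr do rewrite doubleMr.
rewrite -big_distrr /=; congr (d * _)%N.
elim: n => [|n IHn]; first by rewrite big_ord0.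
have pos3 : (0 < 3 ^ n)%N by rewrite expn_gt0.
by rewrite big_ord_recr /= IHn expnS; lia.
Qed.

Section PolynomialGramSchmidt.
Variables (R : realType) (N : nat).
Local Notation C := R[i].
Local Notation PV := 'cV[{poly C}]_N.

Definition col_deg_le (P : PV) d := forall l, deg_le (P l 0) d.

Definition pinner (P Q : PV) : {poly C} :=
  \sum_(l < N) map_poly conjc (P l 0) * Q l 0.

Definition pnorm2 (P : PV) := pinner P P.

Lemma horner_conjc_real (p : {poly C}) (x : R) :
  (map_poly conjc p).[x%:C] = (p.[x%:C])^*.
Proof. by rewrite -{1}(conjc_real x) horner_map. Qed.

Lemma horner_pinner P Q (x : R) : (pinner P Q).[x%:C] = inner (ev x P) (ev x Q).
Proof.
rewrite horner_sum; apply: eq_bigr => l _.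
by rewrite hornerM horner_conjc_real !mxE.
Qed.

Lemma deg_le_pinner P Q a b :
  col_deg_le P a -> col_deg_le Q b -> deg_le (pinner P Q) (a + b).
Proof.
move=> Pa Qb; apply: deg_le_sum => l _; apply: deg_leM (Qb l).
by rewrite /deg_le size_map_poly; exact: Pa.
Qed.

Lemma norm2_eq0 (z : 'cV[C]_N) : norm2 z = 0 -> z = 0.
Proof.
move=> z0; apply/matrixP => l c; rewrite (ord1 c) mxE.
have /eqP : (z l 0)^* * z l 0 = 0.
  apply: (psumr_eq0P (P := predT) (F := fun l => (z l 0)^* * z l 0)) => // i _.
  by rewrite mulrC mul_conjC_ge0.
by rewrite mulrC mul_conjC_eq0 => /eqP.
Qed.

Definition pdenom (Zs : seq PV) := \prod_(j < size Zs) pnorm2 Zs`_j.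

Lemma horner_pdenom (Zs : seq PV) (x : R) :
  (pdenom Zs).[x%:C] = \prod_(z <- map (ev x) Zs) norm2 z.
Proof.
rewrite horner_prod big_map (big_nth 0) big_mkord.
by apply: eq_bigr => j _; rewrite horner_pinner.
Qed.

(* [znew] with each division by [norm2 z_j] cleared against the prefactor. *)
Definition pznew (Zs : seq PV) (M : PV) : PV :=
  pdenom Zs *: M
  - \sum_(j < size Zs)
      ((\prod_(i < size Zs | i != j) pnorm2 Zs`_i) * pinner Zs`_j M) *: Zs`_j.

Lemma ev_pznew Zs M (x : R) : ev x (pznew Zs M) = znew (map (ev x) Zs) (ev x M).
Proof.
rewrite /znew /vnew map_mxB map_mxZ /= horner_evalE horner_pdenom scalerBr.
set g := \prod_(z <- _) _; congr (_ - _).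
rewrite map_mx_sum scaler_sumr big_map (big_nth 0) big_mkord.
apply: eq_bigr => j _; rewrite map_mxZ scalerA /= horner_evalE.
rewrite {}/g -horner_pdenom /pdenom [in RHS](bigD1 j) //= !hornerM horner_pinner.
set p := _.[x%:C]; rewrite [in RHS]/pnorm2 horner_pinner -/(norm2 _).
have [z0|z0] := eqVneq (norm2 (ev x Zs`_j)) 0.
  (* whatever the junk value of the division by [norm2 z_j = 0], [z_j = 0] *)
  by rewrite (norm2_eq0 z0) !scaler0.
by congr (_ *: _); field.
Qed.

Lemma deg_le_prod_pnorm2 (Zs : seq PV) (P : pred 'I_(size Zs))
    (w : 'I_(size Zs) -> nat) :
  (forall j : 'I_(size Zs), col_deg_le Zs`_j (w j)) ->
  deg_le (\prod_(j < size Zs | P j) pnorm2 Zs`_j)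
         (\sum_(j < size Zs | P j) (w j).*2)%N.
Proof.
by move=> Zw; apply: deg_le_prod => j _; rewrite -addnn; apply: deg_le_pinner.
Qed.

Lemma deg_le_pdenom (Zs : seq PV) d :
  (forall j : 'I_(size Zs), col_deg_le Zs`_j (d * 3 ^ j)) ->
  deg_le (pdenom Zs) (d * (3 ^ size Zs).-1).
Proof. by move=> Zd; rewrite -sum_double_pow3; apply: deg_le_prod_pnorm2. Qed.

Lemma col_deg_le_pznew (Zs : seq PV) M d :
  (forall j : 'I_(size Zs), col_deg_le Zs`_j (d * 3 ^ j)) -> col_deg_le M d ->
  col_deg_le (pznew Zs M) (d * 3 ^ size Zs).
Proof.
move=> Zd Md l.
have total : (d * (3 ^ size Zs).-1 + d = d * 3 ^ size Zs)%N.
  by rewrite -mulnSr prednK ?expn_gt0.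
rewrite /pznew !mxE summxE; apply: deg_leD.
  by rewrite -total; apply: deg_leM (Md l); apply: deg_le_pdenom.
apply/deg_leN/deg_le_sum => j _; rewrite !mxE.
have Zj := deg_leM (deg_leM (deg_le_prod_pnorm2 (predC1 j) Zd)
                            (deg_le_pinner (Zd j) Md)) (Zd j l).
apply: deg_le_widen Zj _.
by rewrite -total -sum_double_pow3 [X in (_ <= X + _)%N](bigD1 j) //=; lia.
Qed.

End PolynomialGramSchmidt.

Section GramSchmidtRecursion.
Variables (R : realType) (N : nat).
Local Notation PV := 'cV[{poly R[i]}]_N.
Variable Ms : nat -> PV.

Fixpoint pzlist n : seq PV :=
  if n is n'.+1 then rcons (pzlist n') (pznew (pzlist n') (Ms n')) else [::].

Definition pzvec k := pznew (pzlist k) (Ms k).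

Lemma size_pzlist n : size (pzlist n) = n.
Proof. by elim: n => //= n IHn; rewrite size_rcons IHn. Qed.

Lemma nth_pzlist n j : (j < n)%N -> (pzlist n)`_j = pzvec j.
Proof.
elim: n => // n IHn; rewrite ltnS leq_eqVlt /= nth_rcons size_pzlist.
by case/predU1P => [->|ltjn]; [rewrite ltnn eqxx | rewrite ltjn IHn].
Qed.

Section DegreeGrowth.
Variable d : nat.
Hypothesis Md : forall j, col_deg_le (Ms j) d.

Lemma col_deg_le_pzvec k : col_deg_le (pzvec k) (d * 3 ^ k).
Proof.
elim/ltn_ind: k => k IHk.
have := @col_deg_le_pznew _ _ (pzlist k) (Ms k) d.
rewrite size_pzlist; apply=> // j.
by rewrite nth_pzlist //; apply: IHk.
Qed.

Lemma col_deg_le_pzlist n (j : 'I_(size (pzlist n))) :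
  col_deg_le (pzlist n)`_j (d * 3 ^ j).
Proof.
have jn : (j < n)%N by rewrite -[X in (_ < X)%N](size_pzlist n).
by rewrite nth_pzlist //; apply: col_deg_le_pzvec.
Qed.

End DegreeGrowth.

Lemma zlist_eval (A B : 'M[R[i]]_N) (x : R) :
  (forall j, ev x (Ms j) = mvec A B x j) ->
  forall n, zlist A B x n = map (ev x) (pzlist n).
Proof. by move=> MsE; elim=> //= n ->; rewrite map_rcons ev_pznew MsE. Qed.

End GramSchmidtRecursion.

Section LinearInterpolation.
Variables (R : realType) (N : nat) (A B : 'M[R[i]]_N).

Definition pMth : 'M[{poly R[i]}]_N :=
  (1 - 'X) *: map_mx polyC A + 'X *: map_mx polyC B.

Definition pmvec (j : nat) : 'cV[{poly R[i]}]_N :=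
  \col_l oapp (pMth l) 0 (insub j : option 'I_N).

Lemma ev_pmvec (x : R) j : ev x (pmvec j) = mvec A B x j.
Proof.
apply/matrixP => l c; rewrite !mxE; case: (insub j) => [j'|] /=; last exact: horner0.
by rewrite !mxE horner_evalE !hornerE.
Qed.

Lemma col_deg_le_pmvec j : col_deg_le (pmvec j) 1.
Proof.
move=> l; rewrite !mxE; case: (insub j) => [j'|] /=; last by rewrite /deg_le size_poly0.
rewrite !mxE -[1%N]/(1 + 0)%N.
apply: deg_leD; apply: deg_leM (deg_leC _); last exact: deg_leX.
by apply: deg_leD; [rewrite /deg_le size_poly1 | exact/deg_leN/deg_leX].
Qed.

End LinearInterpolation.

(* 0-based: k : 'I_N corresponds to paper's index k+1, so D = 3^k - 1. *)
Theorem corollary6 (R : realType) (N : nat) (A B : 'M[R[i]]_N) (k : 'I_N) :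
  (exists q : {poly R[i]}, (size q <= 3 ^ k)%N /\
     forall th : R, zvec A B th k = q.[th%:C] *: vvec A B th k) /\
  (forall l : 'I_N, exists p : {poly R[i]}, (size p <= (3 ^ k).+1)%N /\
     forall th : R, zvec A B th k l 0 = p.[th%:C]).
Proof.
have Md := col_deg_le_pmvec A B.
have zlistE x := zlist_eval (ev_pmvec A B x) k.
split.
  exists (pdenom (pzlist (pmvec A B) k)); split.
    have := deg_le_pdenom (col_deg_le_pzlist (n := k) Md).
    by rewrite size_pzlist /deg_le mul1n prednK ?expn_gt0.
  by move=> th; rewrite /zvec /vvec /znew zlistE horner_pdenom.
move=> l; exists (pzvec (pmvec A B) k l 0); split.
  by have := col_deg_le_pzvec Md k l; rewrite mul1n.
by move=> th; rewrite /zvec zlistE -ev_pmvec -ev_pznew mxE.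
Qed.
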